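(* Let $0<\alpha<1$ and let $\varphi$ be a function on $[0,1]$ with $\varphi(s)\ge 0$ for $0\le s\le 1$ (such that the integrals below exist). Define $$s_{n}=\frac{1}{\Gamma(1-\alpha)}\int_{0}^{1}(n+1-s)^{-\alpha}\varphi(s)\,\mathrm{d}s,\qquad n\ge 0.$$ Then for every $k\in\mathbb{N}$ and every $n\ge k$, $(-1)^{k}\nabla^{k}s_{n}\ge 0$.
   Context: Backward differences: $\nabla^{0}s_{n}=s_{n}$ and $\nabla^{k}s_{n}=\nabla^{k-1}s_{n}-\nabla^{k-1}s_{n-1}$ for $k\ge 1$. *)

From HB Require Import structures.
From mathcomp Require Import all_boot all_order all_algebra.
From mathcomp Require Import all_classical all_reals all_analysis.
Set Implicit Arguments. Unset Strict Implicit. Unset Printing Implicit Defensive.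
Import Order.TTheory GRing.Theory Num.Theory.
Local Open Scope classical_set_scope.
Local Open Scope ring_scope.

Definition Gamma (R : realType) (x : R) : R :=
  fine (\int[@lebesgue_measure R]_(t in `[0%R, +oo[)
          ((t `^ (x - 1)) * expR (- t))%:E).

Fixpoint nabla (R : ringType) (k : nat) (s : nat -> R) (n : nat) : R :=
  match k with
  | 0 => s n
  | k'.+1 => nabla k' s n - nabla k' s n.-1
  end.

Definition kern (R : realType) (alpha : R) (phi : R -> R) (n : nat) (s : R) : R :=
  (n%:R + 1 - s) `^ (- alpha) * phi s.

Definition sseq (R : realType) (alpha : R) (phi : R -> R) (n : nat) : R :=
  (Gamma (1 - alpha))^-1 *
  Rintegral (@lebesgue_measure R) `[0%R, 1%R] (kern alpha phi n).

From HB Require Import structures.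
From mathcomp Require Import all_boot all_order all_algebra.
From mathcomp Require Import all_classical all_reals all_analysis.
From mathcomp Require Import ring.
Set Implicit Arguments. Unset Strict Implicit. Unset Printing Implicit Defensive.
Import Order.TTheory GRing.Theory Num.Theory.
Local Open Scope classical_set_scope.
Local Open Scope ring_scope.

(* Since the kernel is (n + 1 - s)^(-alpha) phi(s), the k-th backward difference
   of s_n is the integral of phi against the k-th backward difference (with step
   1) of z |-> z^(-alpha), evaluated at z = n + 1 - s.  Applying the mean value
   theorem k times, that difference equals the k-th derivative
   (-alpha)(-alpha-1)...(-alpha-k+1) c^(-alpha-k) at some c > 0, whose sign is
   (-1)^k. *)

Fixpoint fnabla (R : pzRingType) (k : nat) (f : R -> R) (x : R) : R :=
  match k with
  | 0 => f x
  | k'.+1 => fnabla k' f x - fnabla k' f (x - 1)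
  end.

Lemma nablaMl (R : nzRingType) (c : R) (s : nat -> R) k n :
  nabla k (fun m => c * s m) n = c * nabla k s n.
Proof. by elim: k n => [|k IH] n //=; rewrite !IH mulrBr. Qed.

Lemma nablaMr (R : nzRingType) (c : R) (s : nat -> R) k n :
  nabla k (fun m => s m * c) n = nabla k s n * c.
Proof. by elim: k n => [|k IH] n //=; rewrite !IH mulrBl. Qed.

Lemma fnablaMl (R : pzRingType) (c : R) (f : R -> R) k x :
  fnabla k (fun y => c * f y) x = c * fnabla k f x.
Proof. by elim: k x => [|k IH] x //=; rewrite !IH mulrBr. Qed.

Lemma nabla_fnabla (R : nzRingType) (f : R -> R) (b : R) k n : (k <= n)%N ->
  nabla k (fun m => f (m%:R + b)) n = fnabla k f (n%:R + b).
Proof.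
elim: k n => [|k IH] [|n] //= kn.
by rewrite IH 1?ltnW // IH // -natr1 addrAC addrK.
Qed.

Lemma is_derive_fnabla (R : realType) (f df : R -> R) (a : R) :
  (forall y, a < y -> is_derive y 1 f (df y)) ->
  forall k x, a + k%:R < x -> is_derive x 1 (fnabla k f) (fnabla k df x).
Proof.
move=> fdf; elim=> [|k IH] x /=; first by rewrite addr0; exact: fdf.
rewrite -natr1 addrA -ltrBrDr => kx.
have ax : a + k%:R < x by apply: (lt_trans kx); rewrite gtrBl.
have shift1 : is_derive x 1 (fun y : R => y - 1) 1.
  by have := is_deriveB (is_derive_id x 1) (is_derive_cst (1 : R) x 1); rewrite subr0.
have := @is_derive1_comp _ _ (fun y => y - 1) x _ _ (IH (x - 1) kx) shift1.
by rewrite mulr1; exact: is_deriveB (IH x ax).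
Qed.

Lemma fnablaS_MVT (R : realType) (f df : R -> R) (a : R) k x :
  (forall y, a < y -> is_derive y 1 f (df y)) -> a + k.+1%:R < x ->
  exists2 c, c \in `]x - 1, x[ & fnabla k.+1 f x = fnabla k df c.
Proof.
move=> fdf; rewrite -natr1 addrA -ltrBrDr => kx.
have lt_x1x : x - 1 < x by rewrite gtrBl ltr01.
have dfn y : x - 1 <= y -> is_derive y 1 (fnabla k f) (fnabla k df y).
  by move=> xy; apply: is_derive_fnabla => //; exact: lt_le_trans xy.
have der : {in `[x - 1, x], forall y, derivable (fnabla k f) y 1}.
  move=> y /[!in_itv] /andP[xy _]; apply: ex_derive; exact: dfn.
have cont := derivable_within_continuous der.
have dfn_open y : y \in `]x - 1, x[ -> is_derive y 1 (fnabla k f) (fnabla k df y).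
  by move=> /[!in_itv] /andP[xy _]; exact/dfn/ltW.
have [c cx E] := MVT lt_x1x dfn_open cont.
by exists c => //=; rewrite E opprB addrC subrK mulr1.
Qed.

Lemma fnabla_powR_sign (R : realType) k (r x : R) : r < 0 -> k%:R < x ->
  0 <= (-1) ^+ k * fnabla k (fun z => z `^ r) x.
Proof.
elim: k r x => [|k IH] r x r0 kx; first by rewrite mul1r powR_ge0.
have kx0 : 0 + k.+1%:R < x by rewrite add0r.
have [c cx ->] := fnablaS_MVT (fun y => @is_derive1_powR R r y) kx0.
rewrite fnablaMl.
set t := fnabla k _ c.
have -> : (-1) ^+ k.+1 * (r * t) = - r * ((-1) ^+ k * t) by rewrite exprS; ring.
apply: mulr_ge0; first by rewrite oppr_ge0 ltW.
apply: IH; first by rewrite subr_lt0 (lt_trans r0).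
move: cx; rewrite in_itv /= => /andP[xc _]; apply: (lt_trans _ xc).
by rewrite ltrBrDr natr1.
Qed.

Lemma Gamma_ge0 (R : realType) (x : R) : 0 <= Gamma x.
Proof.
rewrite fine_ge0 // integral_ge0 // => t _.
by rewrite lee_fin mulr_ge0 ?powR_ge0 ?expR_ge0.
Qed.

Section nabla_integral.
Context d (T : measurableType d) (R : realType) (mu : {measure set T -> \bar R}).
Variables (D : set T) (f : nat -> T -> R).
Hypotheses (intf : forall n, mu.-integrable D (EFin \o f n)) (mD : measurable D).

Lemma integrable_nabla k n : mu.-integrable D (EFin \o (fun x => nabla k (f ^~ x) n)).
Proof.
elim: k n => [|k IH] n; first exact: intf.
exact: eq_integrable (integrableB mD (IH n) (IH n.-1)).
Qed.

Lemma nabla_Rintegral k n :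
  nabla k (fun m => \int[mu]_(x in D) f m x) n = \int[mu]_(x in D) nabla k (f ^~ x) n.
Proof.
elim: k n => [|k IH] n //=.
by rewrite !IH RintegralB // integrable_nabla.
Qed.

End nabla_integral.

Theorem lemma2p5 (R : realType) (alpha : R) (phi : R -> R)
  (ha0 : 0 < alpha) (ha1 : alpha < 1)
  (hphi : forall s : R, 0 <= s <= 1 -> 0 <= phi s)
  (hint : forall n : nat,
      (@lebesgue_measure R).-integrable `[0%R, 1%R]
        (fun s => (kern alpha phi n s)%:E)) :
  forall k n : nat, (k <= n)%N -> 0 <= (-1) ^+ k * nabla k (sseq alpha phi) n.
Proof.
move=> k n kn; rewrite /sseq nablaMl mulrCA (nabla_Rintegral hint) //.
have int_nabla := integrable_nabla hint ltac:(done) k n.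
apply: mulr_ge0; first by rewrite invr_ge0 Gamma_ge0.
(* At s = 1 the point n + 1 - s = n may equal k, so the endpoint is dropped. *)
rewrite -RintegralZl // -(@Rintegral_itv_bndo_bndc R (BLeft 0) 1); last first.
  apply: integrableS (integrableZl _ _ int_nabla) => //.
  by apply: subset_itvl; rewrite bnd_simp.
apply: Rintegral_ge0 => s /=; rewrite in_itv /= => /andP[s0 s1].
have -> : nabla k (kern alpha phi ^~ s) n
          = fnabla k (fun z => z `^ (- alpha)) (n%:R + (1 - s)) * phi s.
  by rewrite -nabla_fnabla // -nablaMr; congr nabla; apply/funext => m; rewrite /kern addrA.
rewrite mulrA; apply: mulr_ge0; last by apply: hphi; rewrite s0 ltW.
apply: fnabla_powR_sign; first by rewrite oppr_lt0.
by rewrite ltr_pwDr ?subr_gt0 ?ler_nat.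
Qed.
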